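(* If $n$ is even, then there exists a line spread $\mathcal F$ of $\mathrm{PG}(2n-1,q)$ such that every line of $\mathcal F$ is scattered with respect to the Desarguesian spread $\mathcal S$, i.e. meets every element of $\mathcal S$ in at most one point.
   Context: Let $q$ be a prime power, $n>1$ an integer, $F=\mathbb F_q\subset M=\mathbb F_{q^n}\subset L=\mathbb F_{q^{2n}}$. Regard $L$ as a $2n$-dimensional $F$-vector space; $\mathrm{PG}(2n-1,q)$ has as points the subspaces $Fz$, $z\in L^*$, and lines the 2-dimensional $F$-subspaces. $\mathcal S$ is the Desarguesian spread of $(n-1)$-subspaces of $\mathrm{PG}(2n-1,q)$ consisting of the projective subspaces determined by the one-dimensional $M$-subspaces $Mz$, $z\in L^*$. A line spread is a set of lines partitioning the point set. A set of points is scattered with respect to a spread if it meets each spread element in at most one point. *)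

From HB Require Import structures.
From mathcomp Require Import all_boot all_order all_algebra all_field.
Set Implicit Arguments. Unset Strict Implicit. Unset Printing Implicit Defensive.
Import GRing.Theory.
Local Open Scope ring_scope.

(* L is a finite field of order q^(2n).  The subfields F = GF(q) and
   M = GF(q^n) are the fixed fields of x |-> x^q and x |-> x^(q^n). *)
Section Geom.
Variable L : finFieldType.

Definition subF (q : nat) : {set L} := [set a : L | a ^+ q == a].
Definition subM (q n : nat) : {set L} := [set a : L | a ^+ (q ^ n) == a].

(* the one-dimensional F-subspace F z (a projective point when z != 0) *)
Definition Fspan (q : nat) (z : L) : {set L} := [set a * z | a in subF q].

(* the one-dimensional M-subspace M z (an element of the Desarguesian spread) *)
Definition Mspan (q n : nat) (z : L) : {set L} := [set a * z | a in subM q n].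

Definition Fspan2 (q : nat) (x y : L) : {set L} :=
  [set a * x + b * y | a in subF q, b in subF q].

(* a line of PG(2n-1,q): a 2-dimensional F-subspace of L *)
Definition is_line (q : nat) (l : {set L}) : Prop :=
  exists x y : L, [/\ x != 0, y \notin Fspan q x & l = Fspan2 q x y].

Definition line_spread (q : nat) (S : {set {set L}}) : Prop :=
  (forall l, l \in S -> is_line q l) /\
  (forall z : L, z != 0 -> exists! l, l \in S /\ Fspan q z \subset l).

Definition scattered_line (q n : nat) (l : {set L}) : Prop :=
  forall w u v : L, w != 0 -> u != 0 -> v != 0 ->
    Fspan q u \subset l -> Fspan q v \subset l ->
    Fspan q u \subset Mspan q n w -> Fspan q v \subset Mspan q n w ->
    Fspan q u = Fspan q v.
End Geom.

From mathcomp Require Import all_boot all_order all_algebra all_field.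
From mathcomp Require Import cyclic ring zify.
Set Implicit Arguments. Unset Strict Implicit. Unset Printing Implicit Defensive.
Import GRing.Theory.
Local Open Scope ring_scope.

(* Write F = GF(q) <= K = GF(q^2) <= M = GF(q^n) <= L = GF(q^2n) and Q = q^n,
   so that M is the fixed field of x |-> x^Q.  Identify L with M^2 through
   the M-linear coordinates (coordX, coordY) and let phi be the q-semilinear
   map (x, y) |-> (y^q, g x^q), where g generates M^*.  As q + 1 divides
   Q - 1 (n is even), g is not a (q+1)-th power in M, so phi has no
   eigenvector with eigenvalue in M.  Hence tau = id + phi is an injective
   F-linear map with tau (c z) = c z + c^q phi z for c in M.  The images
   under tau of the lines K z (the Desarguesian line spread over K) form a
   line spread, and each of them is scattered: tau (c1 z) = m tau (c2 z) with
   m in M forces m^q = m, i.e. the two points coincide. *)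

Lemma fixed_powE (R : idomainType) (x : R) (m : nat) :
  (0 < m)%N -> x != 0 -> (x ^+ m == x) = (x ^+ m.-1 == 1).
Proof.
move=> m_gt0 x_neq0; rewrite -{1}(prednK m_gt0) exprS.
by rewrite -[X in _ == X](mulr1 x) (inj_eq (mulfI x_neq0)).
Qed.

Lemma finField_prim_root (L : finFieldType) :
  exists g : L, (#|L|.-1).-primitive_root g.
Proof.
have card_gt1 := finNzRing_gt1 L.
have N_gt0 : (0 < #|L|.-1)%N by rewrite -ltnS prednK // ltnW.
have : has (#|L|.-1).-primitive_root (enum (predC1 (0 : L))).
  apply: has_prim_root => //; last by rewrite -cardE cardC1.
  - apply/allP => x; rewrite mem_enum /= => x_neq0; rewrite unity_rootE.
    by rewrite -(fixed_powE (ltnW card_gt1)) // expf_card.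
  - exact: enum_uniq.
by case/hasP => g _ g_prim; exists g.
Qed.

Section PrimitiveRootPowers.
Variables (R : fieldType) (N : nat) (z : R).
Hypotheses (N_gt0 : (0 < N)%N) (z_prim : N.-primitive_root z).

Lemma prim_root_neq0 : z != 0.
Proof. by rewrite (prim_root_eq0 z_prim) -lt0n. Qed.

Lemma prim_pow_fixed (e m : nat) :
  (0 < m)%N -> ((z ^+ e) ^+ m == z ^+ e) = (N %| e * m.-1)%N.
Proof.
move=> m_gt0; rewrite fixed_powE ?expf_neq0 ?prim_root_neq0 //.
by rewrite -exprM (prim_order_dvd z_prim).
Qed.

Lemma prim_pow_neq1 (e d : nat) :
  (0 < e)%N -> (1 < d)%N -> (e * d)%N = N -> z ^+ e != 1.
Proof.
move=> e_gt0 d_gt1 edN; rewrite -(prim_order_dvd z_prim) -edN.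
by apply/negP => /(dvdn_leq e_gt0); nia.
Qed.

End PrimitiveRootPowers.

Section SetScaling.
Variables (R : finFieldType) (A : {set R}).
Hypothesis A_mul : forall x y, x \in A -> y \in A -> x * y \in A.

Lemma mulset_eq (c : R) : c \in A -> c != 0 -> [set x * c | x in A] = A.
Proof.
move=> cA c_neq0; apply/eqP; rewrite eqEcard card_imset ?leqnn ?andbT.
  by apply/subsetP => _ /imsetP[x xA ->]; exact: A_mul.
exact: mulIf.
Qed.

End SetScaling.

Lemma exprBn_pchar (R : fieldType) (e : nat) (x y : R) :
  [pchar R].-nat e -> (x - y) ^+ e = x ^+ e - y ^+ e.
Proof. by move=> echar; rewrite exprDn_pchar // exprNn_pchar. Qed.

Lemma Fspan_scale (L : finFieldType) (q : nat) (m v : L) :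
  m ^+ q = m -> m != 0 -> Fspan q (m * v) = Fspan q v.
Proof.
move=> mF m_neq0; apply/setP => x; apply/imsetP/imsetP => -[a].
  rewrite inE => /eqP aF ->; exists (a * m); rewrite ?mulrA //.
  by rewrite inE exprMn aF mF.
rewrite inE => /eqP aF ->; exists (a / m); last by rewrite mulrA mulfVK.
by rewrite inE exprMn exprVn aF mF.
Qed.

Lemma Fspan_self (L : finFieldType) (q : nat) (v : L) : v \in Fspan q v.
Proof. by apply/imsetP; exists 1; rewrite ?mul1r // inE expr1n. Qed.

Section TwistedSpread.
Variables (L : finFieldType) (q n : nat).
Hypotheses (qchar : [pchar L].-nat q) (q_gt1 : (1 < q)%N) (n_gt0 : (0 < n)%N)
  (n_even : ~~ odd n) (cardL : #|L| = (q ^ (2 * n))%N).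

Local Notation Q := (q ^ n)%N.
Local Notation N := #|L|.-1.

Lemma Q_gt1 : (1 < Q)%N.
Proof. by rewrite -{1}(expn0 q) ltn_exp2l. Qed.

Lemma N_eq : N = (Q.-1 * Q.+1)%N.
Proof.
rewrite cardL mul2n -addnn expnD.
by have := Q_gt1; move: Q => m m_gt1; nia.
Qed.

(* Since n is even, GF(q^2) is a subfield of M = GF(q^n). *)
Lemma dvd_qq_Q : ((q * q).-1 %| Q.-1)%N.
Proof.
rewrite -(even_halfK n_even) -muln2 mulnC expnM.
have -> : (q * q = q ^ 2)%N by rewrite expnS expn1.
exact: dvdn_pred_predX.
Qed.

Lemma dvd_q1_Q : (q.+1 %| Q.-1)%N.
Proof.
apply: dvdn_trans dvd_qq_Q; apply/dvdnP; exists q.-1.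
by move: q_gt1; clear; nia.
Qed.

Lemma QcharL : [pchar L].-nat Q.
Proof. by rewrite pnatX qchar. Qed.

Lemma powQK (x : L) : x ^+ Q ^+ Q = x.
Proof. by rewrite -exprM -expnD addnn -mul2n -cardL expf_card. Qed.

Lemma F_sub_M (a : L) : a ^+ q = a -> a ^+ Q = a.
Proof. by move=> aF; elim: n => [|j IH]; rewrite ?expr1 // expnS exprM aF. Qed.


Variable gamma : L.
Hypothesis gamma_prim : N.-primitive_root gamma.

Lemma N_gt0 : (0 < N)%N.
Proof. by rewrite N_eq muln_gt0 /=; move: Q_gt1; clear; lia. Qed.

Lemma gamma_pow_fixed (e m : nat) :
  (0 < m)%N -> ((gamma ^+ e) ^+ m == gamma ^+ e) = (N %| e * m.-1)%N.
Proof. exact: prim_pow_fixed N_gt0 gamma_prim e m. Qed.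

Lemma gamma_notin_M : gamma ^+ Q != gamma.
Proof.
have := gamma_pow_fixed 1 (ltnW Q_gt1); rewrite expr1 => ->.
apply/negP => /dvdn_leq; rewrite N_eq mul1n; move: Q_gt1; clear; nia.
Qed.

(* genM = gamma ^ (Q + 1) generates the multiplicative group of M. *)
Definition genM : L := gamma ^+ Q.+1.

Lemma genM_in_M : genM ^+ Q = genM.
Proof.
by apply/eqP; rewrite gamma_pow_fixed ?N_eq 1?mulnC // ltnW // Q_gt1.
Qed.

Lemma genM_neq0 : genM != 0.
Proof. by rewrite expf_neq0 // (prim_root_neq0 N_gt0 gamma_prim). Qed.

(* As q + 1 divides Q - 1, a generator of M^* is not a (q+1)-th power in M. *)
Lemma genM_not_pow (r : L) : r ^+ Q = r -> r != 0 -> r ^+ q.+1 != genM.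
Proof.
move=> rM r_neq0; apply/eqP => r_pow.
have c_eq : (Q.-1 %/ q.+1 * q.+1)%N = Q.-1 by rewrite divnK ?dvd_q1_Q.
have c_gt0 : (0 < Q.-1 %/ q.+1)%N.
  by move: c_eq Q_gt1; move: (Q.-1 %/ q.+1)%N => c; clear; nia.
have : genM ^+ (Q.-1 %/ q.+1) = 1.
  apply/eqP; rewrite -r_pow -exprM mulnC c_eq -fixed_powE ?rM //.
  by rewrite ltnW ?Q_gt1.
apply/eqP; rewrite /genM -exprM.
apply: (prim_pow_neq1 N_gt0 gamma_prim (d := q.+1)).
- by rewrite muln_gt0 c_gt0.
- by rewrite ltnS ltnW.
- by rewrite -mulnA c_eq N_eq mulnC.
Qed.

Definition omega_exp : nat := (Q.-1 %/ (q * q).-1 * Q.+1)%N.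
Definition omega : L := gamma ^+ omega_exp.

Lemma omega_exp_eq : (omega_exp * (q * q).-1)%N = N.
Proof. by rewrite /omega_exp mulnAC divnK ?dvd_qq_Q // N_eq. Qed.

Lemma omega_in_M : omega ^+ Q = omega.
Proof.
apply/eqP; rewrite gamma_pow_fixed; last by rewrite ltnW // Q_gt1.
by rewrite -omega_exp_eq dvdn_mul ?dvd_qq_Q.
Qed.

Lemma omega_qq : omega ^+ q ^+ q = omega.
Proof.
apply/eqP; rewrite -exprM gamma_pow_fixed ?omega_exp_eq ?dvdnn //.
by rewrite muln_gt0 (ltnW q_gt1).
Qed.

Lemma omega_notin_F : omega ^+ q != omega.
Proof.
have qq_gt1 : (1 < (q * q).-1)%N by move: q_gt1; clear; nia.
have e_gt0 : (0 < omega_exp)%N.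
  by have := N_gt0; rewrite -omega_exp_eq muln_gt0 => /andP[].
rewrite gamma_pow_fixed ?(ltnW q_gt1) //; apply/negP => /dvdn_leq.
rewrite -omega_exp_eq muln_gt0 e_gt0 leq_pmul2l //.
by move: q_gt1; clear; nia.
Qed.

(* Coordinates identifying L with M^2: z |-> (z + z^Q, gamma z + gamma^Q z^Q),
   an M-linear bijection with inverse ofCoord. *)
Definition coordX (z : L) : L := z + z ^+ Q.
Definition coordY (z : L) : L := gamma * z + gamma ^+ Q * z ^+ Q.
Definition ofCoord (x y : L) : L := (gamma ^+ Q * x - y) / (gamma ^+ Q - gamma).

Lemma gamma_conj_neq : gamma ^+ Q - gamma != 0.
Proof. by rewrite subr_eq0 gamma_notin_M. Qed.

Lemma coordX_in_M (z : L) : coordX z ^+ Q = coordX z.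
Proof. by rewrite /coordX exprDn_pchar ?QcharL // powQK addrC. Qed.

Lemma coordY_in_M (z : L) : coordY z ^+ Q = coordY z.
Proof.
by rewrite /coordY exprDn_pchar ?QcharL // !exprMn !powQK addrC.
Qed.

Lemma coordD (z w : L) :
  coordX (z + w) = coordX z + coordX w /\ coordY (z + w) = coordY z + coordY w.
Proof. by rewrite /coordX /coordY exprDn_pchar ?QcharL //; split; ring. Qed.

Lemma coord_scale (c z : L) : c ^+ Q = c ->
  coordX (c * z) = c * coordX z /\ coordY (c * z) = c * coordY z.
Proof. by move=> cM; rewrite /coordX /coordY exprMn cM; split; ring. Qed.

Lemma coord_inj (z : L) : coordX z = 0 -> coordY z = 0 -> z = 0.
Proof.
rewrite /coordX /coordY => /eqP; rewrite addrC addr_eq0 => /eqP ->.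
rewrite mulrN -mulrBl => /eqP; rewrite mulf_eq0 subr_eq0 eq_sym.
by rewrite (negbTE gamma_notin_M) => /eqP.
Qed.

Lemma coord_ofCoord (x y : L) : x ^+ Q = x -> y ^+ Q = y ->
  coordX (ofCoord x y) = x /\ coordY (ofCoord x y) = y.
Proof.
move=> xM yM; have den := gamma_conj_neq.
have den' : gamma - gamma ^+ Q != 0 by rewrite -opprB oppr_eq0.
rewrite /coordX /coordY /ofCoord exprMn exprVn !exprBn_pchar ?QcharL //.
by rewrite !exprMn powQK xM yM; split; field; rewrite ?den ?den'.
Qed.

(* The q-semilinear map phi reads (x, y) |-> (y^q, genM x^q) in coordinates;
   as genM is not a (q+1)-th power in M, phi has no eigenvector over M. *)
Definition phi (z : L) : L := ofCoord (coordY z ^+ q) (genM * coordX z ^+ q).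

Lemma coord_phi (z : L) :
  coordX (phi z) = coordY z ^+ q /\ coordY (phi z) = genM * coordX z ^+ q.
Proof.
by apply: coord_ofCoord; rewrite ?exprMn ?genM_in_M exprAC ?coordX_in_M
  ?coordY_in_M.
Qed.

Lemma phiD (z w : L) : phi (z + w) = phi z + phi w.
Proof.
rewrite /phi; have [-> ->] := coordD z w.
by rewrite /ofCoord !exprDn_pchar //; field; rewrite gamma_conj_neq.
Qed.

Lemma phi_semilinear (c z : L) : c ^+ Q = c -> phi (c * z) = c ^+ q * phi z.
Proof.
move=> cM; rewrite /phi; have [-> ->] := coord_scale z cM.
by rewrite /ofCoord !exprMn; field; rewrite gamma_conj_neq.
Qed.

Lemma phi_no_eigenvector (m z : L) : m ^+ Q = m -> phi z = m * z -> z = 0.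
Proof.
move=> mM phi_z; have [xphi yphi] := coord_phi z.
have [xm ym] := coord_scale z mM; rewrite phi_z {}xm {}ym in xphi yphi.
have [x0 | x_neq0] := eqVneq (coordX z) 0.
  apply: coord_inj => //; apply/eqP; move: xphi; rewrite x0 mulr0 => /eqP.
  by rewrite eq_sym expf_eq0 => /andP[].
have [y0 | y_neq0] := eqVneq (coordY z) 0.
  move: yphi; rewrite y0 mulr0 => /eqP; rewrite eq_sym mulf_eq0.
  by rewrite (negbTE genM_neq0) expf_eq0 (negbTE x_neq0) andbF.
have ratioM : (coordY z / coordX z) ^+ Q = coordY z / coordX z.
  by rewrite exprMn exprVn coordX_in_M coordY_in_M.
have := genM_not_pow ratioM; rewrite mulf_neq0 ?invr_eq0 // => /(_ isT).
have xq_neq0 : coordX z ^+ q != 0 by rewrite expf_neq0.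
rewrite exprS exprMn exprVn -xphi.
suff -> : coordY z / coordX z * (m * coordX z / coordX z ^+ q) = genM.
  by rewrite eqxx.
rewrite [RHS](_ : genM = m * coordY z / coordX z ^+ q).
  by field; rewrite x_neq0 xq_neq0.
by rewrite yphi mulfK.
Qed.

Definition tau (z : L) : L := z + phi z.

Lemma tauD (z w : L) : tau (z + w) = tau z + tau w.
Proof. by rewrite /tau phiD addrACA. Qed.

Lemma tau_semilinear (c z : L) : c ^+ Q = c -> tau (c * z) = c * z + c ^+ q * phi z.
Proof. by move=> cM; rewrite /tau phi_semilinear. Qed.

Lemma tau_Flinear (a z : L) : a ^+ q = a -> tau (a * z) = a * tau z.
Proof. by move=> aF; rewrite tau_semilinear ?F_sub_M // aF mulrDr. Qed.

Lemma tau_inj : injective tau.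
Proof.
move=> z w tau_eq; apply/eqP; rewrite -subr_eq0; apply/eqP.
apply: (@phi_no_eigenvector (-1)); first by rewrite exprNn_pchar ?QcharL ?expr1n.
have phiB : phi (z - w) = phi z - phi w.
  by apply/eqP; rewrite eq_sym subr_eq -phiD subrK.
have phiz : phi z = w + phi w - z.
  by rewrite -[w + phi w]/(tau w) -tau_eq /tau addrAC subrr add0r.
by rewrite phiB phiz; ring.
Qed.

Lemma tau0 : tau 0 = 0.
Proof. by rewrite -(mul0r 0) tau_Flinear ?mul0r // expr0n gtn_eqF // ltnW. Qed.

(* K = F + F omega is the subfield GF(q^2) of M. *)
Definition Kfield : {set L} := Fspan2 q 1 omega.

Lemma KfieldP (c : L) :
  reflect (exists a b, [/\ a ^+ q = a, b ^+ q = b & c = a + b * omega])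
          (c \in Kfield).
Proof.
apply: (iffP imset2P) => [[a b] | [a [b [aF bF ->]]]].
  by rewrite !inE => /eqP aF /eqP bF ->; exists a, b; rewrite mulr1.
by exists a b; rewrite ?inE ?aF ?bF ?mulr1.
Qed.

Lemma F_sub_K (a : L) : a ^+ q = a -> a \in Kfield.
Proof.
move=> aF; apply/KfieldP; exists a, 0.
by rewrite expr0n gtn_eqF ?mul0r ?addr0 // ltnW.
Qed.

Lemma K_sub_M (c : L) : c \in Kfield -> c ^+ Q = c.
Proof.
case/KfieldP => a [b [aF bF ->]].
by rewrite exprDn_pchar ?QcharL // exprMn omega_in_M !F_sub_M.
Qed.

(* omega satisfies omega^2 = s omega + t with s, t in F. *)
Lemma Kfield_mul (c d : L) : c \in Kfield -> d \in Kfield -> c * d \in Kfield.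
Proof.
case/KfieldP => a [b [aF bF ->]] /KfieldP [a' [b' [aF' bF' ->]]].
pose s := omega + omega ^+ q; pose t := - (omega * omega ^+ q).
have sF : s ^+ q = s by rewrite exprDn_pchar // omega_qq addrC.
have tF : t ^+ q = t by rewrite exprNn_pchar // exprMn omega_qq mulrC.
apply/KfieldP; exists (a * a' + b * b' * t), (a * b' + b * a' + b * b' * s).
split; first by rewrite exprDn_pchar // !exprMn aF bF aF' bF' tF.
  by rewrite !exprDn_pchar // !exprMn aF bF aF' bF' sF.
by rewrite /s /t; ring.
Qed.

Definition tline (z : L) : {set L} := Fspan2 q (tau z) (tau (omega * z)).

Lemma tlineE (z : L) : tline z = [set tau (c * z) | c in Kfield].
Proof.
apply/setP => x; apply/imset2P/imsetP.
  case=> a b; rewrite !inE => /eqP aF /eqP bF ->; exists (a + b * omega).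
    by apply/KfieldP; exists a, b.
  by rewrite mulrDl -mulrA tauD (tau_Flinear _ aF) (tau_Flinear _ bF).
case=> c /KfieldP [a [b [aF bF ->]]] ->; exists a b; rewrite ?inE ?aF ?bF //.
by rewrite mulrDl -mulrA tauD (tau_Flinear _ aF) (tau_Flinear _ bF).
Qed.

Lemma tline_scale (c z : L) : c \in Kfield -> c != 0 -> tline (c * z) = tline z.
Proof.
move=> cK c_neq0; rewrite !tlineE -[in RHS](mulset_eq Kfield_mul cK c_neq0).
by rewrite -imset_comp; apply: eq_imset => x /=; rewrite mulrA.
Qed.

(* tau z and tau (omega z) are F-independent since omega \notin F. *)
Lemma tline_is_line (z : L) : z != 0 -> is_line q (tline z).
Proof.
move=> z_neq0; exists (tau z), (tau (omega * z)); split => //.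
  apply: contra z_neq0 => /eqP tz0; apply/eqP.
  by apply: tau_inj; rewrite tz0 tau0.
apply/negP => /imsetP [a]; rewrite inE => /eqP aF.
rewrite -tau_Flinear // => /tau_inj /(mulIf z_neq0) omega_eq.
by move: omega_notin_F; rewrite omega_eq aF eqxx.
Qed.

Definition twisted_spread : {set {set L}} := [set tline z | z in [set~ 0]].

Lemma twisted_spread_is_line_spread : line_spread q twisted_spread.
Proof.
split=> [l /imsetP [z] | w w_neq0].
  by rewrite !inE => z_neq0 ->; exact: tline_is_line.
have [tau_inv _ tau_invK] := injF_bij tau_inj.
pose z := tau_inv w; have tz : tau z = w by rewrite /z tau_invK.
have z_neq0 : z != 0 by apply: contra w_neq0 => /eqP z0; rewrite -tz z0 tau0.
exists (tline z); split.
  split; first by apply/imsetP; exists z; rewrite ?inE.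
  apply/subsetP => x /imsetP [a]; rewrite inE => /eqP aF ->.
  by rewrite tlineE -tz -tau_Flinear //; apply/imsetP; exists a; rewrite ?F_sub_K.
move=> l [/imsetP [z' _ ->] /subsetP sub_w].
have /imsetP [c cK w_eq] : w \in [set tau (c * z') | c in Kfield].
  by rewrite -tlineE sub_w ?Fspan_self.
have z_eq : z = c * z' by apply: tau_inj; rewrite tz.
have c_neq0 : c != 0 by apply: contra z_neq0 => /eqP c0; rewrite z_eq c0 mul0r.
by rewrite z_eq tline_scale.
Qed.

(* The heart of the argument: if tau (c1 z) = m tau (c2 z) with c1, c2, m
   in M, then m lies in F, because phi has no eigenvector over M. *)
Lemma tau_M_multiple (c1 c2 z m : L) :
  c1 ^+ Q = c1 -> c2 ^+ Q = c2 -> m ^+ Q = m -> z != 0 -> c2 != 0 ->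
  tau (c1 * z) = m * tau (c2 * z) -> m ^+ q = m.
Proof.
move=> c1M c2M mM z_neq0 c2_neq0; rewrite !tau_semilinear // => tau_eq.
have lin : (c1 - m * c2) * z = (m * c2 ^+ q - c1 ^+ q) * phi z.
  apply/eqP; rewrite -subr_eq0; apply/eqP.
  transitivity (c1 * z + c1 ^+ q * phi z - m * (c2 * z + c2 ^+ q * phi z)).
    by ring.
  by rewrite tau_eq subrr.
have [d0 | d_neq0] := eqVneq (m * c2 ^+ q - c1 ^+ q) 0.
  move: lin; rewrite d0 mul0r => /eqP; rewrite mulf_eq0 (negbTE z_neq0) orbF.
  rewrite subr_eq0 => /eqP c1_eq; move/eqP: d0; rewrite c1_eq exprMn subr_eq0.
  by move=> /eqP /(mulIf (expf_neq0 q c2_neq0)).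
pose e := (c1 - m * c2) / (m * c2 ^+ q - c1 ^+ q).
have eM : e ^+ Q = e.
  rewrite /e exprMn exprVn !exprBn_pchar ?QcharL // !exprMn.
  by rewrite !(exprAC _ q) c1M c2M mM.
have phi_z : phi z = e * z by apply: (mulfI d_neq0); rewrite /e -lin; field.
by move: z_neq0; rewrite (phi_no_eigenvector eM phi_z) eqxx.
Qed.

Lemma tline_scattered (z : L) : z != 0 -> scattered_line q n (tline z).
Proof.
move=> z_neq0 w u v w_neq0 u_neq0 v_neq0 /subsetP u_l /subsetP v_l u_Mw v_Mw.
move: (u_l u (Fspan_self q u)) (v_l v (Fspan_self q v)); rewrite tlineE.
case/imsetP => c1 c1K u_eq /imsetP [c2 c2K v_eq].
case/imsetP: (subsetP u_Mw u (Fspan_self q u)) => mu.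
rewrite inE => /eqP muM u_w.
case/imsetP: (subsetP v_Mw v (Fspan_self q v)) => nu.
rewrite inE => /eqP nuM v_w.
have nu_neq0 : nu != 0.
  by apply: contra v_neq0 => /eqP nu0; rewrite v_w nu0 mul0r.
have c2_neq0 : c2 != 0.
  by apply: contra v_neq0 => /eqP c0; rewrite v_eq c0 mul0r tau0.
have uv : u = mu / nu * v by rewrite u_w v_w mulrA mulfVK.
have mF : (mu / nu) ^+ q = mu / nu.
  apply: (tau_M_multiple (K_sub_M c1K) (K_sub_M c2K) _ z_neq0 c2_neq0).
    by rewrite exprMn exprVn muM nuM.
  by rewrite -u_eq -v_eq.
rewrite uv Fspan_scale //.
by apply: contra u_neq0 => /eqP m0; rewrite uv m0 mul0r.
Qed.

End TwistedSpread.

Theorem mainTheorem10 (q n : nat) (L : finFieldType) :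
  (exists p k : nat, [/\ prime p, (0 < k)%N & q = (p ^ k)%N]) ->
  (1 < n)%N -> ~~ odd n -> #|L| = (q ^ (2 * n))%N ->
  exists S : {set {set L}},
    line_spread q S /\ (forall l, l \in S -> scattered_line q n l).
Proof.
move=> [p [k [p_prime k_gt0 q_eq]]] n_gt1 n_even cardL.
have pL : p \in [pchar L].
  by apply: (card_finPcharP (n := k * (2 * n))); rewrite // cardL q_eq -expnM.
have qchar : [pchar L].-nat q.
  by rewrite q_eq pnatX (eq_pnat _ (pcharf_eq pL)) pnat_id.
have q_gt1 : (1 < q)%N by rewrite q_eq -{1}(expn0 p) ltn_exp2l ?prime_gt1.
have n_gt0 : (0 < n)%N by rewrite ltnW.
have [gamma gamma_prim] := finField_prim_root L.
exists (twisted_spread q n gamma); split.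
  exact: twisted_spread_is_line_spread.
by move=> l /imsetP [z]; rewrite !inE => z_neq0 ->; exact: tline_scattered.
Qed.
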